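(* Let $\mathcal{C},\mathcal{C}'$ be symmetric monoidal anti-involutive categories with duals, with closed monoidal positivity structures $P$ and $P'$ respectively, such that $\mathcal{C}_P$ and $\mathcal{C}'_{P'}$ are symmetric monoidally dagger equivalent. Then $P^*=P$ if and only if $(P')^*=P'$. In other words, dagger compactness is a well-defined property of a symmetric monoidal dagger category, preserved under symmetric monoidal dagger equivalences.
   Context: Symmetric monoidal anti-involutive category $(\mathcal{C},d,\eta)$: symmetric monoidal category with symmetric monoidal functor $d\colon\mathcal{C}\to\mathcal{C}^{\mathrm{op}}$ (monoidal structure $\chi$) and monoidal natural isomorphism $\eta\colon\mathrm{id}\Rightarrow d^2$ with $d(\eta_x)\circ\eta_{dx}=\mathrm{id}$. A Hermitian pairing is an isomorphism $h\colon c\to dc$ with $d(h)\circ\eta_c=h$. $\mathrm{Herm}\,\mathcal{C}$: objects $(c,h)$, morphisms all morphisms of $\mathcal{C}$, dagger $f^\dagger=h_1^{-1}\circ d(f)\circ h_2$, tensor $(c_1\otimes c_2,\chi\circ(h_1\otimes h_2))$. A closed monoidal positivity structure $P$ is a collection of objects of $\mathrm{Herm}\,\mathcal{C}$ surjecting onto objects of $\mathcal{C}$, closed under tensor product and under transfer $h\mapsto d(g)\circ h\circ g$ along isomorphisms $g\colon c'\to c$; $\mathcal{C}_P$ is the full symmetric monoidal dagger subcategory on $P$. Fix a dual functor $(\cdot)^*$ (choice of $x^*,\mathrm{ev}_x,\mathrm{coev}_x$, with $f^*$ the dual morphism); let $\kappa_x\colon(dx)^*\to d(x^* )$ be the canonical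 uniqueness-of-duals isomorphism (both are duals of $dx$, the latter since $d$ is symmetric monoidal). The dual Hermitian pairing of $h\colon c\to dc$ is $\kappa_c\circ(h^* )^{-1}\colon c^*\to d(c^* )$, and $P^*$ denotes the closure under transfer of the set of dual Hermitian pairings of elements of $P$. A symmetric monoidal dagger category with duals presented as $\mathcal{C}_P$ is dagger compact if $P^*=P$. *)

Set Implicit Arguments.
Unset Strict Implicit.

Record CatData : Type := {
  Ob : Type;
  Hom : Ob -> Ob -> Type;
  idm : forall x : Ob, Hom x x;
  comp : forall x y z : Ob, Hom y z -> Hom x y -> Hom x z }.
Arguments Hom {c} _ _.
Arguments idm {c} x.
Arguments comp {c x y z} _ _.

Declare Scope cat_scope.
Notation "g ∘ f" := (comp g f) (at level 40, left associativity) : cat_scope.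
Open Scope cat_scope.

Section CatDefs.
Variable C : CatData.

Record CatLaws : Prop := {
  comp_idl : forall (x y : Ob C) (f : Hom x y), idm y ∘ f = f;
  comp_idr : forall (x y : Ob C) (f : Hom x y), f ∘ idm x = f;
  comp_assoc : forall (w x y z : Ob C) (f : Hom w x) (g : Hom x y) (h : Hom y z),
      h ∘ (g ∘ f) = (h ∘ g) ∘ f }.

Definition inverse_pair (x y : Ob C) (f : Hom x y) (g : Hom y x) : Prop :=
  g ∘ f = idm x /\ f ∘ g = idm y.

Definition is_iso (x y : Ob C) (f : Hom x y) : Prop :=
  exists g : Hom y x, inverse_pair f g.
End CatDefs.

(** * Symmetric monoidal categories *)

Record SMData (C : CatData) : Type := {
  tens : Ob C -> Ob C -> Ob C;
  tensm : forall x x' y y' : Ob C, Hom x x' -> Hom y y' -> Hom (tens x y) (tens x' y');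
  munit : Ob C;
  alpha : forall x y z : Ob C, Hom (tens (tens x y) z) (tens x (tens y z));
  alpha_inv : forall x y z : Ob C, Hom (tens x (tens y z)) (tens (tens x y) z);
  lam : forall x : Ob C, Hom (tens munit x) x;
  lam_inv : forall x : Ob C, Hom x (tens munit x);
  rho : forall x : Ob C, Hom (tens x munit) x;
  rho_inv : forall x : Ob C, Hom x (tens x munit);
  sigma : forall x y : Ob C, Hom (tens x y) (tens y x) }.
Arguments tens {C} _ _ _.
Arguments tensm {C} _ {x x' y y'} _ _.
Arguments munit {C} _.
Arguments alpha {C} _ x y z.
Arguments alpha_inv {C} _ x y z.
Arguments lam {C} _ x.
Arguments lam_inv {C} _ x.
Arguments rho {C} _ x.
Arguments rho_inv {C} _ x.
Arguments sigma {C} _ x y.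

Section SMDefs.
Variables (C : CatData) (M : SMData C).
Local Notation "x ⊗ y" := (tens M x y) (at level 30, right associativity).
Local Notation "f ⊗m g" := (tensm M f g) (at level 30, right associativity).
Local Notation I := (munit M).

Record SMLaws : Prop := {
  tensm_id : forall x y : Ob C, idm x ⊗m idm y = idm (x ⊗ y);
  tensm_comp : forall (x x' x'' y y' y'' : Ob C) (f : Hom x x') (f' : Hom x' x'')
                 (g : Hom y y') (g' : Hom y' y''),
      (f' ∘ f) ⊗m (g' ∘ g) = (f' ⊗m g') ∘ (f ⊗m g);
  alpha_iso : forall x y z : Ob C, inverse_pair (alpha M x y z) (alpha_inv M x y z);
  lam_iso : forall x : Ob C, inverse_pair (lam M x) (lam_inv M x);
  rho_iso : forall x : Ob C, inverse_pair (rho M x) (rho_inv M x);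
  alpha_nat : forall (x x' y y' z z' : Ob C) (f : Hom x x') (g : Hom y y') (h : Hom z z'),
      alpha M x' y' z' ∘ ((f ⊗m g) ⊗m h) = (f ⊗m (g ⊗m h)) ∘ alpha M x y z;
  lam_nat : forall (x y : Ob C) (f : Hom x y), lam M y ∘ (idm I ⊗m f) = f ∘ lam M x;
  rho_nat : forall (x y : Ob C) (f : Hom x y), rho M y ∘ (f ⊗m idm I) = f ∘ rho M x;
  sigma_nat : forall (x x' y y' : Ob C) (f : Hom x x') (g : Hom y y'),
      sigma M x' y' ∘ (f ⊗m g) = (g ⊗m f) ∘ sigma M x y;
  sigma_invol : forall x y : Ob C, sigma M y x ∘ sigma M x y = idm (x ⊗ y);
  pentagon : forall w x y z : Ob C,
      alpha M w x (y ⊗ z) ∘ alpha M (w ⊗ x) y z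
      = (idm w ⊗m alpha M x y z) ∘ alpha M w (x ⊗ y) z ∘ (alpha M w x y ⊗m idm z);
  triangle : forall x y : Ob C,
      (idm x ⊗m lam M y) ∘ alpha M x I y = rho M x ⊗m idm y;
  hexagon : forall x y z : Ob C,
      alpha M y z x ∘ sigma M x (y ⊗ z) ∘ alpha M x y z
      = (idm y ⊗m sigma M x z) ∘ alpha M y x z ∘ (sigma M x y ⊗m idm z) }.

(** * Anti-involutions: a symmetric monoidal functor d : C -> C^op with
    monoidal structure chi, and a monoidal natural iso eta : id => d^2
    with d(eta_x) o eta_{dx} = id.  chi is written in the direction of C,
    chi_{x,y} : dx (x) dy -> d(x (x) y), as in the tensor of Herm C. *)

Record AntiInv : Type := {
  dO : Ob C -> Ob C;
  dM : forall x y : Ob C, Hom x y -> Hom (dO y) (dO x);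
  chi : forall x y : Ob C, Hom (dO x ⊗ dO y) (dO (x ⊗ y));
  chi_inv : forall x y : Ob C, Hom (dO (x ⊗ y)) (dO x ⊗ dO y);
  chi0 : Hom I (dO I);
  chi0_inv : Hom (dO I) I;
  eta : forall x : Ob C, Hom x (dO (dO x));
  eta_inv : forall x : Ob C, Hom (dO (dO x)) x }.

Variable A : AntiInv.
Local Notation d := (dO A).
Local Notation dm f := (dM A f).

Record AntiInvLaws : Prop := {
  dM_id : forall x : Ob C, dm (idm x) = idm (d x);
  dM_comp : forall (x y z : Ob C) (f : Hom x y) (g : Hom y z), dm (g ∘ f) = dm f ∘ dm g;
  chi_iso : forall x y : Ob C, inverse_pair (chi A x y) (chi_inv A x y);
  chi0_iso : inverse_pair (chi0 A) (chi0_inv A);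
  chi_nat : forall (x x' y y' : Ob C) (f : Hom x x') (g : Hom y y'),
      chi A x y ∘ (dm f ⊗m dm g) = dm (f ⊗m g) ∘ chi A x' y';
  chi_assoc : forall x y z : Ob C,
      chi A (x ⊗ y) z ∘ (chi A x y ⊗m idm (d z))
      = dm (alpha M x y z) ∘ chi A x (y ⊗ z) ∘ (idm (d x) ⊗m chi A y z)
        ∘ alpha M (d x) (d y) (d z);
  chi_lunit : forall x : Ob C,
      chi A I x ∘ (chi0 A ⊗m idm (d x)) = dm (lam M x) ∘ lam M (d x);
  chi_runit : forall x : Ob C,
      chi A x I ∘ (idm (d x) ⊗m chi0 A) = dm (rho M x) ∘ rho M (d x);
  chi_sym : forall x y : Ob C,
      chi A y x ∘ sigma M (d x) (d y) = dm (sigma M y x) ∘ chi A x y;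
  eta_iso : forall x : Ob C, inverse_pair (eta A x) (eta_inv A x);
  eta_nat : forall (x y : Ob C) (f : Hom x y), eta A y ∘ f = dm (dm f) ∘ eta A x;
  eta_tens : forall x y : Ob C,
      dm (chi A x y) ∘ eta A (x ⊗ y) = chi A (d x) (d y) ∘ (eta A x ⊗m eta A y);
  eta_unit : dm (chi0 A) ∘ eta A I = chi0 A;
  eta_invol : forall x : Ob C, dm (eta A x) ∘ eta A (d x) = idm (d x) }.

Definition is_herm (c : Ob C) (h : Hom c (d c)) : Prop :=
  is_iso h /\ dm h ∘ eta A c = h.

Definition transfer (c c' : Ob C) (g : Hom c' c) (h : Hom c (d c)) : Hom c' (d c') :=
  dm g ∘ h ∘ g.

Definition herm_tens (c1 c2 : Ob C) (h1 : Hom c1 (d c1)) (h2 : Hom c2 (d c2))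
  : Hom (c1 ⊗ c2) (d (c1 ⊗ c2)) := chi A c1 c2 ∘ (h1 ⊗m h2).

Definition PairingSet : Type := forall c : Ob C, Hom c (d c) -> Prop.

(** Closed monoidal positivity structure.  "Closed under tensor product"
    includes the monoidal unit (I, chi0) of Herm C (the nullary tensor),
    so that C_P is a monoidal subcategory. *)
Record PosStruct (P : PairingSet) : Prop := {
  pos_herm : forall (c : Ob C) (h : Hom c (d c)), P c h -> is_herm h;
  pos_surj : forall c : Ob C, exists h : Hom c (d c), P c h;
  pos_unit : P I (chi0 A);
  pos_tens : forall (c1 c2 : Ob C) (h1 : Hom c1 (d c1)) (h2 : Hom c2 (d c2)),
      P c1 h1 -> P c2 h2 -> P (c1 ⊗ c2) (herm_tens h1 h2);
  pos_trans : forall (c c' : Ob C) (h : Hom c (d c)) (g : Hom c' c),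
      P c h -> is_iso g -> P c' (transfer g h) }.

Definition pairing_set_eq (P Q : PairingSet) : Prop :=
  forall (c : Ob C) (h : Hom c (d c)), P c h <-> Q c h.

(** * Duals *)

Record DualData : Type := {
  dual : Ob C -> Ob C;
  ev : forall x : Ob C, Hom (dual x ⊗ x) I;
  coev : forall x : Ob C, Hom I (x ⊗ dual x) }.

Variable D : DualData.
Local Notation "x ^*" := (dual D x) (at level 8).

Record DualLaws : Prop := {
  zigzag1 : forall x : Ob C,
      rho M x ∘ (idm x ⊗m ev D x) ∘ alpha M x (x^*) x ∘ (coev D x ⊗m idm x) ∘ lam_inv M x
      = idm x;
  zigzag2 : forall x : Ob C,
      lam M (x^*) ∘ (ev D x ⊗m idm (x^*)) ∘ alpha_inv M (x^*) x (x^*)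
        ∘ (idm (x^*) ⊗m coev D x) ∘ rho_inv M (x^*)
      = idm (x^*) }.

Definition dualm (x y : Ob C) (f : Hom x y) : Hom (y^*) (x^*) :=
  lam M (x^*) ∘ (ev D y ⊗m idm (x^*)) ∘ alpha_inv M (y^*) y (x^*)
    ∘ (idm (y^*) ⊗m (f ⊗m idm (x^*))) ∘ (idm (y^*) ⊗m coev D x) ∘ rho_inv M (y^*).

(** d(x^∨) is a dual of dx (d is symmetric monoidal): its coevaluation
    I -> dx (x) d(x^∨) is  sigma o chi^{-1} o d(ev_x) o chi0. *)
Definition coev_d (x : Ob C) : Hom I (d x ⊗ d (x^*)) :=
  sigma M (d (x^*)) (d x) ∘ chi_inv A (x^*) x ∘ dm (ev D x) ∘ chi0 A.

(** kappa_x : (dx)^∨ -> d(x^∨), the canonical uniqueness-of-duals iso. *)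
Definition kappa (x : Ob C) : Hom ((d x)^*) (d (x^*)) :=
  lam M (d (x^*)) ∘ (ev D (d x) ⊗m idm (d (x^*))) ∘ alpha_inv M ((d x)^*) (d x) (d (x^*))
    ∘ (idm ((d x)^*) ⊗m coev_d x) ∘ rho_inv M ((d x)^*).

Definition is_dual_pairing (c : Ob C) (h : Hom c (d c)) (k : Hom (c^*) (d (c^*))) : Prop :=
  exists hi : Hom (c^*) ((d c)^*), inverse_pair (dualm h) hi /\ k = kappa c ∘ hi.

Definition Pstar (P : PairingSet) : PairingSet :=
  fun (c' : Ob C) (k' : Hom c' (d c')) =>
    exists (c : Ob C) (h : Hom c (d c)) (k : Hom (c^*) (d (c^*))),
      P c h /\ is_dual_pairing h k /\
      exists g : Hom c' (c^*), is_iso g /\ k' = transfer g k.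

End SMDefs.

Arguments dO {C M} _ _.
Arguments dM {C M} _ {x y} _.
Arguments chi {C M} _ x y.
Arguments chi0 {C M} _.
Arguments eta {C M} _ x.

(** * Symmetric monoidal anti-involutive categories with duals *)

Record SMAICD : Type := {
  sC : CatData;
  sM : SMData sC;
  sA : AntiInv sM;
  sD : DualData sM;
  sC_laws : CatLaws sC;
  sM_laws : SMLaws sM;
  sA_laws : AntiInvLaws sA;
  sD_laws : DualLaws sD }.

(** * The symmetric monoidal dagger category C_P *)

Section CP.
Variables (X : SMAICD) (P : PairingSet (sA X)) (hP : PosStruct P).
Local Notation M := (sM X).
Local Notation A := (sA X).

Record PObj : Type := { pob : Ob (sC X); ph : Hom pob (dO A pob); pin : @P pob ph }.

Definition ptens (a b : PObj) : PObj :=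
  {| pob := tens M (pob a) (pob b);
     ph := herm_tens (ph a) (ph b);
     pin := pos_tens hP (pin a) (pin b) |}.

Definition punit : PObj := {| pob := munit M; ph := chi0 A; pin := pos_unit hP |}.

Definition is_dagger (a b : PObj) (f : Hom (pob a) (pob b)) (g : Hom (pob b) (pob a)) : Prop :=
  exists hai : Hom (dO A (pob a)) (pob a),
    inverse_pair (ph a) hai /\ g = hai ∘ dM A f ∘ ph b.

Definition unitary (a b : PObj) (u : Hom (pob a) (pob b)) : Prop :=
  exists v : Hom (pob b) (pob a), @is_dagger a b u v /\ inverse_pair u v.
End CP.

Arguments is_dagger {X P} a b f g.
Arguments unitary {X P} a b u.
Arguments ptens {X P} hP a b.
Arguments punit {X P} hP.

Arguments pob {X P} _.
Arguments ph {X P} _.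

(** A symmetric monoidal dagger equivalence C_P -> C'_{P'}: a strong
    symmetric monoidal dagger functor with unitary structure morphisms,
    which is full, faithful, and essentially surjective up to unitary iso
    (equivalently: it has an inverse dagger functor with unitary natural
    isomorphisms). *)
Unset Implicit Arguments.
Section Equiv.
Variables (X Y : SMAICD)
          (P : PairingSet (sA X)) (hP : PosStruct P)
          (Q : PairingSet (sA Y)) (hQ : PosStruct Q).
Local Notation M := (sM X).
Local Notation N := (sM Y).

Record SMDaggerEquivalence : Type := {
  F : PObj P -> PObj Q;
  Fm : forall a b : PObj P, Hom (pob a) (pob b) -> Hom (pob (F a)) (pob (F b));
  mu : forall a b : PObj P,
      Hom (tens N (pob (F a)) (pob (F b))) (pob (F (ptens hP a b)));
  mu0 : Hom (munit N) (pob (F (punit hP)));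
  F_id : forall a : PObj P, Fm a a (idm (pob a)) = idm (pob (F a));
  F_comp : forall (a b c : PObj P) (f : Hom (pob a) (pob b)) (g : Hom (pob b) (pob c)),
      Fm a c (g ∘ f) = Fm b c g ∘ Fm a b f;
  F_dagger : forall (a b : PObj P) (f : Hom (pob a) (pob b)) (g : Hom (pob b) (pob a)),
      is_dagger a b f g -> is_dagger (F a) (F b) (Fm a b f) (Fm b a g);
  mu_nat : forall (a a' b b' : PObj P) (f : Hom (pob a) (pob a')) (g : Hom (pob b) (pob b')),
      mu a' b' ∘ tensm N (Fm a a' f) (Fm b b' g)
      = Fm (ptens hP a b) (ptens hP a' b') (tensm M f g) ∘ mu a b;
  mu_unitary : forall a b : PObj P,
      unitary (ptens hQ (F a) (F b)) (F (ptens hP a b)) (mu a b);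
  mu0_unitary : unitary (punit hQ) (F (punit hP)) mu0;
  F_assoc : forall a b c : PObj P,
      Fm (ptens hP (ptens hP a b) c) (ptens hP a (ptens hP b c))
         (alpha M (pob a) (pob b) (pob c))
        ∘ mu (ptens hP a b) c ∘ tensm N (mu a b) (idm (pob (F c)))
      = mu a (ptens hP b c) ∘ tensm N (idm (pob (F a))) (mu b c)
        ∘ alpha N (pob (F a)) (pob (F b)) (pob (F c));
  F_lunit : forall a : PObj P,
      Fm (ptens hP (punit hP) a) a (lam M (pob a)) ∘ mu (punit hP) a
        ∘ tensm N mu0 (idm (pob (F a)))
      = lam N (pob (F a));
  F_runit : forall a : PObj P,
      Fm (ptens hP a (punit hP)) a (rho M (pob a)) ∘ mu a (punit hP)
        ∘ tensm N (idm (pob (F a))) mu0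
      = rho N (pob (F a));
  F_sym : forall a b : PObj P,
      Fm (ptens hP a b) (ptens hP b a) (sigma M (pob a) (pob b)) ∘ mu a b
      = mu b a ∘ sigma N (pob (F a)) (pob (F b));
  F_full : forall (a b : PObj P) (g : Hom (pob (F a)) (pob (F b))),
      exists f : Hom (pob a) (pob b), Fm a b f = g;
  F_faithful : forall (a b : PObj P) (f g : Hom (pob a) (pob b)),
      Fm a b f = Fm a b g -> f = g;
  F_ess_surj : forall b : PObj Q,
      exists (a : PObj P) (u : Hom (pob (F a)) (pob b)), unitary (F a) b u }.

Definition sm_dagger_equivalent : Prop := inhabited SMDaggerEquivalence.
End Equiv.
Arguments sm_dagger_equivalent {X Y P} hP {Q} hQ.

(* Call (b, k) a dagger dual of (a, h) in C_P if b is a dual of a whose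
   coevaluation is the symmetry composed with the dagger of the evaluation
   e : b ⊗ a -> I.  The dual c^* with the dual pairing kappa_c ∘ (h^∨)^-1 is a
   dagger dual of (c, h).  Conversely, by uniqueness of duals every dagger dual of
   (c, h) is isomorphic to c^*, and the pairing it carries is the transfer of
   the dual pairing, because the dual pairing is the unique m with
   (h ⊗ m) ∘ coev_c = coev_{dc}.  Hence P^* = P exactly when every object of
   C_P has a dagger dual and is a dagger dual of some object.  That property
   only involves the symmetric monoidal dagger structure of C_P; a symmetric
   monoidal dagger equivalence preserves and reflects dagger duals and is
   essentially surjective up to unitary isomorphism, so it transports it. *)

From Stdlib Require Import Setoid.

Set Implicit Arguments.
Unset Strict Implicit.

Existing Class CatLaws.
Existing Class SMLaws.
Existing Class AntiInvLaws.
Existing Class DualLaws.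
Existing Class PosStruct.
#[global] Instance sC_laws_inst (X : SMAICD) : CatLaws (sC X) := sC_laws X.
#[global] Instance sM_laws_inst (X : SMAICD) : SMLaws (sM X) := sM_laws X.
#[global] Instance sA_laws_inst (X : SMAICD) : AntiInvLaws (sA X) := sA_laws X.
#[global] Instance sD_laws_inst (X : SMAICD) : DualLaws (sD X) := sD_laws X.

Section Category.
Context {C : CatData} {HC : CatLaws C}.

Lemma idm_comp {x y : Ob C} (f : Hom x y) : idm y ∘ f = f.
Proof. apply comp_idl, HC. Qed.

Lemma comp_idm {x y : Ob C} (f : Hom x y) : f ∘ idm x = f.
Proof. apply comp_idr, HC. Qed.

Lemma compA {w x y z : Ob C} (f : Hom w x) (g : Hom x y) (h : Hom y z) :
  h ∘ (g ∘ f) = (h ∘ g) ∘ f.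
Proof. apply comp_assoc, HC. Qed.

Lemma comp_eq_r {x y : Ob C} {f g : Hom x y} :
  f = g -> forall (w : Ob C) (k : Hom w x), f ∘ k = g ∘ k.
Proof. now intros ->. Qed.

Lemma cancel_split_epi {x y z : Ob C} (f g : Hom y z) (r : Hom x y) (r' : Hom y x) :
  r ∘ r' = idm y -> f ∘ r = g ∘ r -> f = g.
Proof.
  intros H1 H2. now rewrite <- (comp_idm f), <- (comp_idm g), <- H1, !compA, H2.
Qed.

Lemma cancel_split_mono {x y z : Ob C} (f g : Hom x y) (r : Hom y z) (r' : Hom z y) :
  r' ∘ r = idm y -> r ∘ f = r ∘ g -> f = g.
Proof.
  intros H1 H2. now rewrite <- (idm_comp f), <- (idm_comp g), <- H1, <- !compA, H2.
Qed.

Lemma inverse_unique {x y : Ob C} (f : Hom x y) g g' :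
  inverse_pair f g -> inverse_pair f g' -> g = g'.
Proof. intros [H1 _] [_ H4]. rewrite <- (comp_idm g), <- H4, compA, H1, idm_comp. reflexivity. Qed.

Lemma inverse_pair_sym {x y : Ob C} (f : Hom x y) g : inverse_pair f g -> inverse_pair g f.
Proof. now intros [H1 H2]. Qed.

Lemma inverse_pair_idm (x : Ob C) : inverse_pair (idm x) (idm x).
Proof. split; apply idm_comp. Qed.

Lemma natural_inverse {x x' y y' : Ob C} (a : Hom y y') (ai : Hom y' y) (b : Hom x x')
    (bi : Hom x' x) (l : Hom x y) (r : Hom x' y') :
  inverse_pair a ai -> inverse_pair b bi -> a ∘ l = r ∘ b -> ai ∘ r = l ∘ bi.
Proof.
  intros [Ha _] [_ Hb] E.
  rewrite <- (comp_idm (ai ∘ r)), <- Hb, <- compA, (compA bi b r), <- E.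
  now rewrite !compA, Ha, idm_comp.
Qed.

Lemma comp_inverse_eq {x y z : Ob C} (a : Hom y z) ai (b : Hom x z) bi (l : Hom x y) :
  inverse_pair a ai -> inverse_pair b bi -> a ∘ l = b -> l ∘ bi = ai.
Proof.
  intros [Ha _] [_ Hb] E.
  rewrite <- (idm_comp l), <- Ha, <- !compA, (compA bi l a), E. now rewrite Hb, comp_idm.
Qed.

Lemma inverse_pair_comp {x y z : Ob C} (f : Hom x y) (g : Hom y z) fi gi :
  inverse_pair f fi -> inverse_pair g gi -> inverse_pair (g ∘ f) (fi ∘ gi).
Proof.
  intros [H1 H2] [H3 H4]. split.
  - rewrite <- compA, (compA f), H3, idm_comp. exact H1.
  - rewrite <- compA, (compA gi), H2, idm_comp. exact H4.
Qed.
End Category.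

Ltac assoc_right := repeat rewrite <- compA.
Ltac assoc_right_in H := repeat rewrite <- compA in H.
Ltac specialize_evars H :=
  repeat (let H' := fresh in epose proof (H _) as H'; clear H; rename H' into H).

(** Rewrites with [u = v] where [u] is a segment of a right-associated chain of
    composites, by also trying [u ∘ k = v ∘ k]. *)
Ltac chain_rewrite_with E :=
  assoc_right_in E;
  let E' := fresh in pose proof (comp_eq_r E) as E';
  repeat setoid_rewrite <- compA in E';
  first [rewrite E' | rewrite E]; clear E E'; assoc_right.
Tactic Notation "chain_rewrite" constr(L) :=
  let E := fresh in epose proof L as E; specialize_evars E; chain_rewrite_with E.
Tactic Notation "chain_rewrite" "<-" constr(L) :=
  let E := fresh in epose proof L as E; specialize_evars E; apply eq_sym in E;
  chain_rewrite_with E.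

Section Monoidal.
Context {C : CatData} {HC : CatLaws C} {M : SMData C} {HM : SMLaws M}.
Local Notation "x ⊗ y" := (tens M x y) (at level 30, right associativity).
Local Notation "f ⊗m g" := (tensm M f g) (at level 30, right associativity).
Local Notation I := (munit M).

Lemma tensm_idm (x y : Ob C) : idm x ⊗m idm y = idm (x ⊗ y).
Proof. apply tensm_id, HM. Qed.

Lemma tensm_merge {x x' x'' y y' y'' : Ob C} (f : Hom x x') (f' : Hom x' x'')
    (g : Hom y y') (g' : Hom y' y'') :
  (f' ⊗m g') ∘ (f ⊗m g) = (f' ∘ f) ⊗m (g' ∘ g).
Proof. symmetry; apply tensm_comp, HM. Qed.

Lemma tensm_comp_l {x y z w : Ob C} (f : Hom x y) (g : Hom y z) :
  (g ∘ f) ⊗m idm w = (g ⊗m idm w) ∘ (f ⊗m idm w).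
Proof. now rewrite tensm_merge, idm_comp. Qed.

Lemma tensm_comp_r {x y z w : Ob C} (f : Hom x y) (g : Hom y z) :
  idm w ⊗m (g ∘ f) = (idm w ⊗m g) ∘ (idm w ⊗m f).
Proof. now rewrite tensm_merge, idm_comp. Qed.

Lemma tensm_comp_l_chain {x y z w v : Ob C} (f : Hom x y) (g : Hom y z) (k : Hom v (x ⊗ w)) :
  (g ⊗m idm w) ∘ ((f ⊗m idm w) ∘ k) = ((g ∘ f) ⊗m idm w) ∘ k.
Proof. now rewrite compA, <- tensm_comp_l. Qed.

Lemma tensm_comp_r_chain {x y z w v : Ob C} (f : Hom x y) (g : Hom y z) (k : Hom v (w ⊗ x)) :
  (idm w ⊗m g) ∘ ((idm w ⊗m f) ∘ k) = (idm w ⊗m (g ∘ f)) ∘ k.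
Proof. now rewrite compA, <- tensm_comp_r. Qed.

Lemma tensm_split_lr {x y z w : Ob C} (f : Hom x y) (g : Hom z w) :
  f ⊗m g = (f ⊗m idm w) ∘ (idm x ⊗m g).
Proof. now rewrite tensm_merge, idm_comp, comp_idm. Qed.

Lemma tensm_split_rl {x y z w : Ob C} (f : Hom x y) (g : Hom z w) :
  f ⊗m g = (idm y ⊗m g) ∘ (f ⊗m idm z).
Proof. now rewrite tensm_merge, idm_comp, comp_idm. Qed.

Lemma inverse_pair_tensm {x y z w : Ob C} (f : Hom x y) (g : Hom z w) fi gi :
  inverse_pair f fi -> inverse_pair g gi -> inverse_pair (f ⊗m g) (fi ⊗m gi).
Proof.
  intros [H1 H2] [H3 H4]. split; rewrite tensm_merge.
  - now rewrite H1, H3, tensm_idm.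
  - now rewrite H2, H4, tensm_idm.
Qed.

Lemma alpha_natural {x x' y y' z z' : Ob C} (f : Hom x x') (g : Hom y y') (h : Hom z z') :
  alpha M x' y' z' ∘ ((f ⊗m g) ⊗m h) = (f ⊗m (g ⊗m h)) ∘ alpha M x y z.
Proof. apply alpha_nat, HM. Qed.
Lemma lam_natural {x y : Ob C} (f : Hom x y) : lam M y ∘ (idm I ⊗m f) = f ∘ lam M x.
Proof. apply lam_nat, HM. Qed.
Lemma rho_natural {x y : Ob C} (f : Hom x y) : rho M y ∘ (f ⊗m idm I) = f ∘ rho M x.
Proof. apply rho_nat, HM. Qed.
Lemma sigma_natural {x x' y y' : Ob C} (f : Hom x x') (g : Hom y y') :
  sigma M x' y' ∘ (f ⊗m g) = (g ⊗m f) ∘ sigma M x y.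
Proof. apply sigma_nat, HM. Qed.

Lemma alpha_inv_natural {x x' y y' z z' : Ob C} (f : Hom x x') (g : Hom y y') (h : Hom z z') :
  alpha_inv M x' y' z' ∘ (f ⊗m (g ⊗m h)) = ((f ⊗m g) ⊗m h) ∘ alpha_inv M x y z.
Proof. eapply natural_inverse; [apply alpha_iso, HM .. | apply alpha_natural]. Qed.
Lemma lam_inv_natural {x y : Ob C} (f : Hom x y) :
  lam_inv M y ∘ f = (idm I ⊗m f) ∘ lam_inv M x.
Proof. eapply natural_inverse; [apply lam_iso, HM .. | apply lam_natural]. Qed.
Lemma rho_inv_natural {x y : Ob C} (f : Hom x y) :
  rho_inv M y ∘ f = (f ⊗m idm I) ∘ rho_inv M x.
Proof. eapply natural_inverse; [apply rho_iso, HM .. | apply rho_natural]. Qed.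

Lemma unit_tensm_inj {x y : Ob C} (f g : Hom x y) : idm I ⊗m f = idm I ⊗m g -> f = g.
Proof.
  intro H. apply (cancel_split_epi (r := lam M x) (r' := lam_inv M x)); [apply lam_iso, HM |].
  now rewrite <- !lam_natural, H.
Qed.
Lemma tensm_unit_inj {x y : Ob C} (f g : Hom x y) : f ⊗m idm I = g ⊗m idm I -> f = g.
Proof.
  intro H. apply (cancel_split_epi (r := rho M x) (r' := rho_inv M x)); [apply rho_iso, HM |].
  now rewrite <- !rho_natural, H.
Qed.

(** Kelly's consequences of the pentagon and triangle axioms. *)
Lemma lam_tens (x y : Ob C) : lam M (x ⊗ y) ∘ alpha M I x y = lam M x ⊗m idm y.
Proof.
  apply unit_tensm_inj.
  apply (cancel_split_epi (r := alpha M I (I ⊗ x) y ∘ (alpha M I I x ⊗m idm y))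
                          (r' := (alpha_inv M I I x ⊗m idm y) ∘ alpha_inv M I (I ⊗ x) y)).
  { eapply proj2, inverse_pair_comp; [| apply alpha_iso, HM].
    apply inverse_pair_tensm; [apply alpha_iso, HM | apply inverse_pair_idm]. }
  rewrite tensm_comp_r. assoc_right.
  chain_rewrite <- (pentagon _ I I x y).
  chain_rewrite (triangle _ I (x ⊗ y)).
  rewrite <- (tensm_idm x y). chain_rewrite <- (alpha_natural (rho M I) (idm x) (idm y)).
  chain_rewrite <- (triangle _ I x). rewrite tensm_comp_l. assoc_right.
  chain_rewrite (alpha_natural (idm I) (lam M x) (idm y)). reflexivity.
Qed.
Lemma rho_tens (y s : Ob C) : (idm y ⊗m rho M s) ∘ alpha M y s I = rho M (y ⊗ s).
Proof.
  apply tensm_unit_inj.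
  apply (cancel_split_mono (r := alpha M y s I) (r' := alpha_inv M y s I)); [apply alpha_iso, HM |].
  chain_rewrite <- (triangle _ (y ⊗ s) I).
  rewrite <- (tensm_idm y s).
  chain_rewrite (alpha_natural (idm y) (idm s) (lam M I)).
  chain_rewrite (pentagon _ y s I I).
  chain_rewrite <- (tensm_comp_r (w:=y) (alpha M s I I) (idm s ⊗m lam M I)).
  rewrite (triangle _ s I).
  chain_rewrite <- (alpha_natural (idm y) (rho M s) (idm I)).
  rewrite tensm_comp_l. assoc_right. reflexivity.
Qed.

Lemma lam_unit : lam M I = rho M I.
Proof.
  apply tensm_unit_inj.
  assert (E : lam M (I ⊗ I) = idm I ⊗m lam M I).
  { apply (cancel_split_mono (r := lam M I) (r' := lam_inv M I)); [apply lam_iso, HM |].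
    now rewrite lam_natural. }
  now rewrite <- lam_tens, <- (triangle _ I I), E.
Qed.
Lemma lam_inv_unit : lam_inv M I = rho_inv M I.
Proof.
  apply (inverse_unique (f := lam M I)); [apply lam_iso, HM | rewrite lam_unit; apply rho_iso, HM].
Qed.

Lemma rho_inv_tens (y s : Ob C) : idm y ⊗m rho_inv M s = alpha M y s I ∘ rho_inv M (y ⊗ s).
Proof.
  symmetry. eapply comp_inverse_eq; [| apply rho_iso, HM | apply rho_tens].
  apply inverse_pair_tensm; [apply inverse_pair_idm | apply rho_iso, HM].
Qed.

Lemma lam_inv_tens (y z : Ob C) :
  alpha_inv M I y z ∘ lam_inv M (y ⊗ z) = lam_inv M y ⊗m idm z.
Proof.
  apply (inverse_unique (f := lam M y ⊗m idm z)).
  - rewrite <- lam_tens. apply inverse_pair_comp; apply alpha_iso || apply lam_iso; exact HM.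
  - apply inverse_pair_tensm; [apply lam_iso, HM | apply inverse_pair_idm].
Qed.

Lemma triangle_inv (x y : Ob C) :
  alpha M x I y ∘ (rho_inv M x ⊗m idm y) = idm x ⊗m lam_inv M y.
Proof.
  eapply comp_inverse_eq; [| | apply triangle, HM].
  - apply inverse_pair_tensm; [apply inverse_pair_idm | apply lam_iso, HM].
  - apply inverse_pair_tensm; [apply rho_iso, HM | apply inverse_pair_idm].
Qed.

Lemma pentagon_inv_r (w x y z : Ob C) :
  (idm w ⊗m alpha_inv M x y z) ∘ alpha M w x (y ⊗ z)
  = alpha M w (x ⊗ y) z ∘ (alpha M w x y ⊗m idm z) ∘ alpha_inv M (w ⊗ x) y z.
Proof.
  eapply natural_inverse; [| apply alpha_iso, HM |].
  - apply inverse_pair_tensm; [apply inverse_pair_idm | apply alpha_iso, HM].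
  - rewrite compA. symmetry. apply pentagon, HM.
Qed.

Lemma pentagon_inv_l (w x y z : Ob C) :
  alpha M (w ⊗ x) y z ∘ (alpha_inv M w x y ⊗m idm z)
  = alpha_inv M w x (y ⊗ z) ∘ (idm w ⊗m alpha M x y z) ∘ alpha M w (x ⊗ y) z.
Proof.
  rewrite <- compA. symmetry. eapply natural_inverse; [apply alpha_iso, HM | |].
  - apply inverse_pair_tensm; [apply alpha_iso, HM | apply inverse_pair_idm].
  - apply pentagon, HM.
Qed.

Definition zigzag_obj {y s : Ob C} (ev : Hom (s ⊗ y) I) (coev : Hom I (y ⊗ s)) : Hom y y :=
  rho M y ∘ (idm y ⊗m ev) ∘ alpha M y s y ∘ (coev ⊗m idm y) ∘ lam_inv M y.
Definition zigzag_dual {y s : Ob C} (ev : Hom (s ⊗ y) I) (coev : Hom I (y ⊗ s)) : Hom s s :=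
  lam M s ∘ (ev ⊗m idm s) ∘ alpha_inv M s y s ∘ (idm s ⊗m coev) ∘ rho_inv M s.
Definition is_duality {y s : Ob C} (ev : Hom (s ⊗ y) I) (coev : Hom I (y ⊗ s)) : Prop :=
  zigzag_obj ev coev = idm y /\ zigzag_dual ev coev = idm s.

(** When [ev] is part of a duality, this is the bijection [Hom I (y ⊗ z) ≅ Hom s z]. *)
Definition transpose {y s z : Ob C} (ev : Hom (s ⊗ y) I) (w : Hom I (y ⊗ z)) : Hom s z :=
  lam M z ∘ (ev ⊗m idm z) ∘ alpha_inv M s y z ∘ (idm s ⊗m w) ∘ rho_inv M s.

Lemma transpose_whisker_coev {y s z : Ob C} (ev : Hom (s ⊗ y) I) (coev : Hom I (y ⊗ s))
    (f : Hom s z) :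
  zigzag_dual ev coev = idm s -> transpose ev ((idm y ⊗m f) ∘ coev) = f.
Proof.
  unfold zigzag_dual, transpose. intro H. assoc_right_in H. rewrite tensm_comp_r. assoc_right.
  chain_rewrite (alpha_inv_natural (idm s) (idm y) f). rewrite tensm_idm.
  chain_rewrite (tensm_merge (idm _) ev f (idm z)).
  rewrite idm_comp, comp_idm, (tensm_split_rl ev f). assoc_right. chain_rewrite (lam_natural f).
  rewrite H, comp_idm. reflexivity.
Qed.

Lemma whisker_transpose_coev {y s z : Ob C} (ev : Hom (s ⊗ y) I) (coev : Hom I (y ⊗ s))
    (w : Hom I (y ⊗ z)) :
  zigzag_obj ev coev = idm y -> (idm y ⊗m transpose ev w) ∘ coev = w.
Proof.
  unfold zigzag_obj, transpose. intro H. assoc_right_in H.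
  rewrite !tensm_comp_r. assoc_right. rewrite rho_inv_tens. assoc_right.
  chain_rewrite (rho_inv_natural coev).
  chain_rewrite <- (alpha_natural (idm y) (idm s) w).
  chain_rewrite (tensm_merge coev (idm y ⊗m idm s) (idm I) w).
  rewrite tensm_idm, idm_comp, comp_idm, (tensm_split_lr coev w).
  assoc_right. rewrite <- lam_inv_unit. chain_rewrite <- (lam_inv_natural w).
  chain_rewrite (pentagon_inv_r y s y z).
  chain_rewrite <- (alpha_natural (idm y) ev (idm z)).
  chain_rewrite (triangle _ y z).
  rewrite <- (tensm_idm y z). chain_rewrite (alpha_inv_natural coev (idm y) (idm z)).
  chain_rewrite (lam_inv_tens y z).
  repeat rewrite tensm_comp_l_chain. assoc_right.
  rewrite H, tensm_idm, idm_comp. reflexivity.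
Qed.
Lemma ev_whisker_transpose {y s z : Ob C} (ev : Hom (s ⊗ y) I) (coev : Hom I (y ⊗ s))
    (u : Hom (z ⊗ y) I) :
  zigzag_obj ev coev = idm y -> ev ∘ (transpose u coev ⊗m idm y) = u.
Proof.
  unfold zigzag_obj, transpose. intro H. assoc_right_in H.
  rewrite !tensm_comp_l. assoc_right. rewrite <- lam_tens. assoc_right.
  chain_rewrite <- (lam_natural ev).
  chain_rewrite (alpha_natural u (idm s) (idm y)). rewrite (tensm_idm s y).
  chain_rewrite <- (tensm_split_rl u ev). rewrite (tensm_split_lr u ev). assoc_right.
  rewrite lam_unit. chain_rewrite (rho_natural u).
  chain_rewrite (pentagon_inv_l z y s y).
  rewrite <- (tensm_idm z y). chain_rewrite <- (alpha_inv_natural (idm z) (idm y) ev).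
  rewrite <- rho_tens. assoc_right. chain_rewrite (proj2 (alpha_iso _ z y I)). rewrite idm_comp.
  chain_rewrite (alpha_natural (idm z) coev (idm y)).
  chain_rewrite (triangle_inv z y).
  repeat rewrite tensm_comp_r_chain. rewrite <- tensm_comp_r. assoc_right.
  now rewrite H, tensm_idm, comp_idm.
Qed.
Lemma zigzag_obj_conj {y y' s s' : Ob C} (u : Hom y' y) ui (v : Hom s' s) vi
    (ev : Hom (s ⊗ y) I) (coev : Hom I (y ⊗ s)) :
  v ∘ vi = idm s ->
  zigzag_obj (ev ∘ (v ⊗m u)) ((ui ⊗m vi) ∘ coev) = ui ∘ zigzag_obj ev coev ∘ u.
Proof.
  unfold zigzag_obj. intro Hv.
  rewrite tensm_comp_r, tensm_comp_l. assoc_right.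
  chain_rewrite <- (alpha_natural (idm y') v u).
  chain_rewrite (tensm_merge (ui ⊗m vi) (idm y' ⊗m v) (idm y') u).
  rewrite tensm_merge, idm_comp, Hv, comp_idm, (tensm_split_lr (ui ⊗m idm s) u). assoc_right.
  chain_rewrite <- (tensm_split_rl coev u). rewrite (tensm_split_lr coev u). assoc_right.
  chain_rewrite <- (lam_inv_natural u).
  chain_rewrite (alpha_natural ui (idm s) (idm y)). rewrite (tensm_idm s y).
  chain_rewrite <- (tensm_split_rl ui ev). rewrite (tensm_split_lr ui ev). assoc_right.
  chain_rewrite (rho_natural ui). reflexivity.
Qed.

Lemma zigzag_dual_conj {y y' s s' : Ob C} (u : Hom y' y) ui (v : Hom s' s) vi
    (ev : Hom (s ⊗ y) I) (coev : Hom I (y ⊗ s)) :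
  u ∘ ui = idm y ->
  zigzag_dual (ev ∘ (v ⊗m u)) ((ui ⊗m vi) ∘ coev) = vi ∘ zigzag_dual ev coev ∘ v.
Proof.
  unfold zigzag_dual. intro Hu.
  rewrite tensm_comp_r, tensm_comp_l. assoc_right.
  chain_rewrite <- (alpha_inv_natural v u (idm s')).
  chain_rewrite (tensm_merge (idm s') v (ui ⊗m vi) (u ⊗m idm s')).
  rewrite tensm_merge, Hu, idm_comp, comp_idm.
  chain_rewrite (tensm_merge (idm s') v coev (idm y ⊗m vi)).
  rewrite comp_idm, (tensm_split_rl v ((idm y ⊗m vi) ∘ coev)), tensm_comp_r. assoc_right.
  chain_rewrite <- (rho_inv_natural v).
  chain_rewrite (alpha_inv_natural (idm s) (idm y) vi). rewrite (tensm_idm s y).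
  chain_rewrite <- (tensm_split_lr ev vi). rewrite (tensm_split_rl ev vi). assoc_right.
  chain_rewrite (lam_natural vi). reflexivity.
Qed.

Lemma is_duality_iso {y y' s s' : Ob C} (u : Hom y' y) ui (v : Hom s' s) vi
    (ev : Hom (s ⊗ y) I) (coev : Hom I (y ⊗ s)) :
  inverse_pair u ui -> inverse_pair v vi -> is_duality ev coev ->
  is_duality (ev ∘ (v ⊗m u)) ((ui ⊗m vi) ∘ coev).
Proof.
  intros [Hu1 Hu2] [Hv1 Hv2] [Z1 Z2]. split.
  - now rewrite zigzag_obj_conj, Z1, comp_idm.
  - now rewrite zigzag_dual_conj, Z2, comp_idm.
Qed.
End Monoidal.

Section Duals.
Context {C : CatData} {HC : CatLaws C} {M : SMData C} {HM : SMLaws M}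
  {D : DualData M} {HD : DualLaws D}.
Local Notation "x ⊗ y" := (tens M x y) (at level 30, right associativity).
Local Notation "f ⊗m g" := (tensm M f g) (at level 30, right associativity).
Local Notation I := (munit M).
Local Notation "x ^*" := (dual D x) (at level 8).

Lemma zigzag_obj_chosen (x : Ob C) : zigzag_obj (ev D x) (coev D x) = idm x.
Proof. apply zigzag1, HD. Qed.
Lemma zigzag_dual_chosen (x : Ob C) : zigzag_dual (ev D x) (coev D x) = idm (x^*).
Proof. apply zigzag2, HD. Qed.

Lemma dualm_transpose {x y : Ob C} (f : Hom x y) :
  dualm D f = transpose (ev D y) ((f ⊗m idm (x^*)) ∘ coev D x).
Proof. unfold dualm, transpose. rewrite tensm_comp_r. assoc_right. reflexivity. Qed.

Lemma comp_transpose {y s z z' : Ob C} (ev : Hom (s ⊗ y) I) (w : Hom I (y ⊗ z)) (m : Hom z z') :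
  m ∘ transpose ev w = transpose ev ((idm y ⊗m m) ∘ w).
Proof.
  unfold transpose. assoc_right.
  chain_rewrite <- (lam_natural m). chain_rewrite <- (tensm_split_rl ev m).
  rewrite (tensm_split_lr ev m). assoc_right.
  rewrite <- (tensm_idm s y). chain_rewrite <- (alpha_inv_natural (idm s) (idm y) m).
  rewrite (tensm_comp_r w). assoc_right. reflexivity.
Qed.

Lemma dualm_id (x : Ob C) : dualm D (idm x) = idm (x^*).
Proof. unfold dualm. rewrite !tensm_idm, comp_idm. apply zigzag_dual_chosen. Qed.

Lemma dualm_comp {x y z : Ob C} (f : Hom x y) (g : Hom y z) :
  dualm D (g ∘ f) = dualm D f ∘ dualm D g.
Proof.
  rewrite (dualm_transpose (g ∘ f)), (dualm_transpose g), comp_transpose. f_equal.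
  rewrite compA, <- tensm_split_rl, (tensm_split_lr g (dualm D f)). assoc_right.
  rewrite (dualm_transpose f), (whisker_transpose_coev _ (zigzag_obj_chosen y)).
  rewrite tensm_comp_l_chain. reflexivity.
Qed.

Lemma inverse_pair_dualm {x y : Ob C} (f : Hom x y) fi :
  inverse_pair f fi -> inverse_pair (dualm D f) (dualm D fi).
Proof. intros [H1 H2]; split; rewrite <- dualm_comp; [rewrite H2 | rewrite H1]; apply dualm_id. Qed.

Lemma tensm_coev_inj {c y z : Ob C} (h : Hom c y) (m m' : Hom (c^*) z) :
  is_iso h -> (h ⊗m m) ∘ coev D c = (h ⊗m m') ∘ coev D c -> m = m'.
Proof.
  intros [hinv [Hh _]] E. rewrite (tensm_split_lr h m), (tensm_split_lr h m') in E.
  assoc_right_in E. apply (cancel_split_mono (r' := hinv ⊗m idm z)) in E.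
  2: { now rewrite <- tensm_comp_l, Hh, tensm_idm. }
  rewrite <- (transpose_whisker_coev m (zigzag_dual_chosen c)),
    <- (transpose_whisker_coev m' (zigzag_dual_chosen c)), E.
  reflexivity.
Qed.

Lemma chosen_dual_iso {b c : Ob C} (e : Hom (b ⊗ c) I) (coevb : Hom I (c ⊗ b)) :
  is_duality e coevb ->
  exists phi : Hom (c^*) b,
    is_iso phi /\ (idm c ⊗m phi) ∘ coev D c = coevb /\ e ∘ (phi ⊗m idm c) = ev D c.
Proof.
  intros [Z1 Z2].
  set (phi := transpose (ev D c) coevb). set (psi := transpose e (coev D c)).
  assert (Hphi : (idm c ⊗m phi) ∘ coev D c = coevb)
    by exact (whisker_transpose_coev coevb (zigzag_obj_chosen c)).
  assert (Hpsi : (idm c ⊗m psi) ∘ coevb = coev D c)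
    by exact (whisker_transpose_coev (coev D c) Z1).
  assert (Hpsiphi : psi ∘ phi = idm _).
  { rewrite <- (transpose_whisker_coev (psi ∘ phi) (zigzag_dual_chosen c)).
    rewrite tensm_comp_r, <- compA, Hphi, Hpsi. exact (zigzag_dual_chosen c). }
  assert (Hphipsi : phi ∘ psi = idm _).
  { rewrite <- (transpose_whisker_coev (phi ∘ psi) Z2).
    rewrite tensm_comp_r, <- compA, Hpsi, Hphi. exact Z2. }
  exists phi. split; [exists psi; split; assumption | split; [exact Hphi |]].
  rewrite <- (ev_whisker_transpose e (zigzag_obj_chosen c)).
  rewrite <- compA, <- tensm_comp_l. fold psi. rewrite Hpsiphi, tensm_idm, comp_idm.
  reflexivity.
Qed.
End Duals.

Section AntiInvolution.
Context {C : CatData} {HC : CatLaws C} {M : SMData C} {HM : SMLaws M}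
  {A : AntiInv M} {HA : AntiInvLaws A}.
Local Notation "x ⊗ y" := (tens M x y) (at level 30, right associativity).
Local Notation "f ⊗m g" := (tensm M f g) (at level 30, right associativity).
Local Notation d := (dO A).
Local Notation dm := (dM A).

Lemma dM_idm (x : Ob C) : dm (idm x) = idm (d x).
Proof. apply dM_id, HA. Qed.

Lemma dM_compE {x y z : Ob C} (f : Hom x y) (g : Hom y z) : dm (g ∘ f) = dm f ∘ dm g.
Proof. apply dM_comp, HA. Qed.

Lemma chi_inv_natural {x x' y y' : Ob C} (f : Hom x x') (g : Hom y y') :
  (dm f ⊗m dm g) ∘ chi_inv A x' y' = chi_inv A x y ∘ dm (f ⊗m g).
Proof. symmetry; eapply natural_inverse; [apply chi_iso, HA .. | apply chi_nat, HA]. Qed.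

Lemma inverse_pair_herm_tens {b c : Ob C} (k : Hom b (d b)) ki (h : Hom c (d c)) hi :
  inverse_pair k ki -> inverse_pair h hi ->
  inverse_pair (herm_tens k h) ((ki ⊗m hi) ∘ chi_inv A b c).
Proof.
  intros Hk Hh. apply inverse_pair_comp; [now apply inverse_pair_tensm | apply chi_iso, HA].
Qed.

Lemma transfer_idm {c : Ob C} (k : Hom c (d c)) : transfer (idm c) k = k.
Proof. unfold transfer. now rewrite dM_idm, idm_comp, comp_idm. Qed.

Lemma transfer_inverse {c c' : Ob C} (g : Hom c' c) gi (k : Hom c (d c)) :
  inverse_pair g gi -> transfer gi (transfer g k) = k.
Proof.
  intros [_ Hg]. unfold transfer. assoc_right.
  chain_rewrite <- (dM_compE gi g). now rewrite Hg, dM_idm, idm_comp, comp_idm.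
Qed.
End AntiInvolution.

Section DualPairing.
Context {C : CatData} {HC : CatLaws C} {M : SMData C} {HM : SMLaws M}
  {A : AntiInv M} {HA : AntiInvLaws A} {D : DualData M} {HD : DualLaws D}.
Local Notation "x ⊗ y" := (tens M x y) (at level 30, right associativity).
Local Notation "f ⊗m g" := (tensm M f g) (at level 30, right associativity).
Local Notation I := (munit M).
Local Notation d := (dO A).
Local Notation dm := (dM A).
Local Notation "x ^*" := (dual D x) (at level 8).

(** With [tensm_coev_inj], this characterizes the dual pairing of [h]. *)
Lemma tensm_dual_pairing_coev {c : Ob C} (h : Hom c (d c)) hi :
  hi ∘ dualm D h = idm _ -> (h ⊗m (kappa A D c ∘ hi)) ∘ coev D c = coev_d A D c.
Proof.
  intro Hhi. rewrite (tensm_split_rl h), tensm_comp_r. assoc_right.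
  rewrite <- (whisker_transpose_coev ((h ⊗m idm (c^*)) ∘ coev D c) (zigzag_obj_chosen (d c))).
  rewrite <- dualm_transpose, (tensm_comp_r_chain (dualm D h) hi), Hhi, tensm_idm, idm_comp.
  apply (whisker_transpose_coev _ (zigzag_obj_chosen (d c))).
Qed.

(** [(ki ⊗ hinv) ∘ chi^-1 ∘ d(ev_c) ∘ chi0] is the dagger of [ev_c] for the pairing [h]
    on [c] and its dual pairing on [c^*]. *)
Lemma sigma_ev_adjoint_dual_pairing {c : Ob C} (h : Hom c (d c)) hinv hi ki :
  inverse_pair h hinv -> hi ∘ dualm D h = idm _ -> inverse_pair (kappa A D c ∘ hi) ki ->
  sigma M (c^*) c ∘ ((ki ⊗m hinv) ∘ chi_inv A (c^*) c ∘ dm (ev D c) ∘ chi0 A) = coev D c.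
Proof.
  intros [Hh _] Hhi [Hk _].
  assoc_right. chain_rewrite (sigma_natural ki hinv).
  assert (Hcoev_d : coev_d A D c
                    = sigma M (d (c^*)) (d c) ∘ (chi_inv A (c^*) c ∘ (dm (ev D c) ∘ chi0 A))).
  { unfold coev_d. now assoc_right. }
  rewrite <- Hcoev_d, <- (tensm_dual_pairing_coev Hhi).
  now rewrite compA, tensm_merge, Hh, Hk, tensm_idm, idm_comp.
Qed.

(** Conversely, if [e] and the symmetry composed with its dagger form a duality,
    then [k] is a transfer of the dual pairing of [h]. *)
Lemma dagger_duality_dual_pairing {b c : Ob C} (h : Hom c (d c)) hinv (k : Hom b (d b)) ki
    (e : Hom (b ⊗ c) I) hi :
  inverse_pair h hinv -> inverse_pair k ki -> hi ∘ dualm D h = idm _ ->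
  is_duality e (sigma M b c ∘ ((ki ⊗m hinv) ∘ chi_inv A b c ∘ dm e ∘ chi0 A)) ->
  exists g : Hom b (c^*), is_iso g /\ k = transfer g (kappa A D c ∘ hi).
Proof.
  intros Hh Hk Hhi Hdual.
  destruct (chosen_dual_iso Hdual) as [phi [[psi Hphi] [Hcoev Hev]]].
  assert (Htransfer : (h ⊗m transfer phi k) ∘ coev D c = coev_d A D c).
  { unfold transfer. rewrite <- (comp_idm h) at 1. rewrite <- tensm_merge, <- compA, Hcoev.
    assoc_right. chain_rewrite <- (sigma_natural (dm phi ∘ k) h).
    chain_rewrite (tensm_merge ki (dm phi ∘ k) hinv h). rewrite (proj2 Hk), (proj2 Hh), comp_idm.
    rewrite <- (dM_idm c). chain_rewrite (chi_inv_natural phi (idm c)).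
    chain_rewrite <- (dM_compE (phi ⊗m idm c) e). rewrite Hev. unfold coev_d. assoc_right.
    reflexivity. }
  exists psi. split; [exists phi; now apply inverse_pair_sym |].
  rewrite <- (transfer_inverse k Hphi). f_equal.
  apply (tensm_coev_inj (h := h)); [exists hinv; exact Hh |].
  now rewrite Htransfer, tensm_dual_pairing_coev.
Qed.
End DualPairing.

Section DaggerCP.
Context {X : SMAICD} {P : PairingSet (sA X)} {hP : PosStruct P}.
Local Notation M := (sM X).
Local Notation A := (sA X).
Local Notation "x ⊗ y" := (tens M x y) (at level 30, right associativity).
Local Notation "f ⊗m g" := (tensm M f g) (at level 30, right associativity).
Local Notation dm := (dM A).

Lemma pairing_inverse (a : PObj P) : exists hai, inverse_pair (ph a) hai.
Proof. destruct (pos_herm hP (pin a)) as [[hai Ha] _]. eauto. Qed.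

Lemma is_dagger_exists (a b : PObj P) f : exists g, is_dagger a b f g.
Proof. destruct (pairing_inverse a) as [hai Ha]. exists (hai ∘ dm f ∘ ph b), hai. auto. Qed.

Lemma is_dagger_unique (a b : PObj P) f g g' : is_dagger a b f g -> is_dagger a b f g' -> g = g'.
Proof. intros [h1 [H1 ->]] [h2 [H2 ->]]. now rewrite (inverse_unique H1 H2). Qed.

Lemma is_dagger_idm (a : PObj P) : is_dagger a a (idm _) (idm _).
Proof.
  destruct (pairing_inverse a) as [hai Ha]. exists hai. split; [exact Ha |].
  now rewrite dM_idm, comp_idm, (proj1 Ha).
Qed.

Lemma is_dagger_comp (a b c : PObj P) f f' g g' :
  is_dagger a b f f' -> is_dagger b c g g' -> is_dagger a c (g ∘ f) (f' ∘ g').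
Proof.
  intros [ha [Ha ->]] [hb [Hb ->]]. exists ha. split; [exact Ha |].
  rewrite dM_compE. assoc_right. chain_rewrite (proj2 Hb). now rewrite idm_comp.
Qed.

Lemma is_dagger_tensm (a a' b b' : PObj P) f f' g g' :
  is_dagger a b f f' -> is_dagger a' b' g g' ->
  is_dagger (ptens hP a a') (ptens hP b b') (f ⊗m g) (f' ⊗m g').
Proof.
  intros [ha [Ha ->]] [ha' [Ha' ->]].
  exists ((ha ⊗m ha') ∘ chi_inv A (pob a) (pob a')).
  split; [now apply inverse_pair_herm_tens |].
  cbn. unfold herm_tens. assoc_right. chain_rewrite <- (chi_nat _ f g).
  chain_rewrite (proj1 (chi_iso _ (pob a) (pob a'))).
  rewrite idm_comp, !tensm_merge. now assoc_right.
Qed.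

Lemma is_dagger_sym (a b : PObj P) u v :
  is_dagger a b u v -> inverse_pair u v -> is_dagger b a v u.
Proof.
  intros [ha [Ha Ev]] [Hvu Huv].
  destruct (pairing_inverse b) as [hb Hb]. exists hb. split; [exact Hb |].
  assert (E : dm v ∘ ph a = ph b ∘ u).
  { rewrite <- (comp_idm (dm v ∘ ph a)), <- Hvu. rewrite Ev at 2. assoc_right.
    chain_rewrite (proj2 Ha). rewrite idm_comp.
    chain_rewrite <- (dM_compE v u). now rewrite Huv, dM_idm, idm_comp. }
  now rewrite <- compA, E, compA, (proj1 Hb), idm_comp.
Qed.

Lemma is_dagger_transfer (b b0 : PObj P) g gi :
  inverse_pair g gi -> ph b = transfer g (ph b0) -> is_dagger b b0 g gi.
Proof.
  intros [_ Hg] E. destruct (pairing_inverse b) as [hbi Hb]. exists hbi. split; [exact Hb |].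
  transitivity (hbi ∘ ph b ∘ gi); [now rewrite (proj1 Hb), idm_comp |].
  rewrite E. unfold transfer. assoc_right. now rewrite Hg, comp_idm.
Qed.

Definition unitarily_iso (a b : PObj P) : Prop := exists u, unitary a b u.

Lemma unitarily_iso_refl (a : PObj P) : unitarily_iso a a.
Proof. exists (idm _), (idm _). split; [apply is_dagger_idm | apply inverse_pair_idm]. Qed.

Lemma unitarily_iso_sym (a b : PObj P) : unitarily_iso a b -> unitarily_iso b a.
Proof.
  intros [u [v [Hd Hi]]]. exists v, u.
  split; [now apply is_dagger_sym | now apply inverse_pair_sym].
Qed.

Lemma unitarily_iso_transfer (b b0 : PObj P) (g : Hom (pob b) (pob b0)) :
  is_iso g -> ph b = transfer g (ph b0) -> unitarily_iso b b0.
Proof. intros [gi Hg] E. exists g, gi. split; [now apply is_dagger_transfer | exact Hg]. Qed.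
End DaggerCP.

Section DaggerDuals.
Context {X : SMAICD} {P : PairingSet (sA X)} {hP : PosStruct P}.
Local Notation M := (sM X).
Local Notation A := (sA X).
Local Notation D := (sD X).
Local Notation "x ⊗ y" := (tens M x y) (at level 30, right associativity).
Local Notation "f ⊗m g" := (tensm M f g) (at level 30, right associativity).
Local Notation I := (munit M).
Local Notation d := (dO A).
Local Notation dm := (dM A).
Local Notation "x ^*" := (dual D x) (at level 8).

Definition is_dagger_dual (a b : PObj P) : Prop :=
  exists (e : Hom (pob b ⊗ pob a) I) (e' : Hom I (pob b ⊗ pob a)),
    is_dagger (ptens hP b a) (punit hP) e e' /\ is_duality e (sigma M (pob b) (pob a) ∘ e').

Definition has_dagger_duals : Prop :=
  (forall a : PObj P, exists b, is_dagger_dual a b) /\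
  (forall b : PObj P, exists a, is_dagger_dual a b).

Lemma is_dagger_dual_unitarily_iso (a a' b b' : PObj P) :
  unitarily_iso a' a -> unitarily_iso b' b -> is_dagger_dual a b -> is_dagger_dual a' b'.
Proof.
  intros [u [ui [Hu Iu]]] [v [vi [Hv Iv]]] [e [e' [He Hdual]]].
  exists (e ∘ (v ⊗m u)), ((vi ⊗m ui) ∘ e'). split.
  - apply (is_dagger_comp (a := ptens hP b' a') (b := ptens hP b a) (c := punit hP));
      [now apply is_dagger_tensm | exact He].
  - rewrite !compA, sigma_natural, <- compA. now apply is_duality_iso.
Qed.

Lemma dual_pairing_exists (a : PObj P) : exists k, is_dual_pairing (D := D) (ph a) k.
Proof.
  destruct (pairing_inverse a) as [hinv Hh].
  exists (kappa A D (pob a) ∘ dualm D hinv), (dualm D hinv).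
  split; [now apply inverse_pair_dualm | reflexivity].
Qed.

Lemma Pstar_dual_pairing {c : Ob (sC X)} (h : Hom c (d c)) (k : Hom (c^*) (d (c^*))) :
  P h -> is_dual_pairing h k -> Pstar D P k.
Proof.
  intros Hh Hk. exists c, h, k. split; [exact Hh | split; [exact Hk |]].
  exists (idm _). split; [exists (idm _); apply inverse_pair_idm | symmetry; apply transfer_idm].
Qed.

Lemma dual_pairing_is_dagger_dual (a : PObj P) (k : Hom ((pob a)^*) (d ((pob a)^*)))
    (Hk : is_dual_pairing (D := D) (ph a) k) (pk : P k) :
  is_dagger_dual a {| pob := (pob a)^*; ph := k; pin := pk |}.
Proof.
  destruct Hk as [hi [Hhi ->]].
  destruct (pairing_inverse a) as [hinv Hh]. destruct (pos_herm hP pk) as [[ki Hk] _].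
  exists (ev D (pob a)), ((ki ⊗m hinv) ∘ chi_inv A _ _ ∘ dm (ev D _) ∘ chi0 A). split.
  - exists ((ki ⊗m hinv) ∘ chi_inv A _ _).
    split; [now apply inverse_pair_herm_tens | reflexivity].
  - cbn. rewrite (sigma_ev_adjoint_dual_pairing Hh (proj1 Hhi) Hk).
    split; [apply zigzag_obj_chosen | apply zigzag_dual_chosen].
Qed.

Lemma dagger_dual_transfer (a b : PObj P) k :
  is_dagger_dual a b -> is_dual_pairing (D := D) (ph a) k ->
  exists g, is_iso g /\ ph b = transfer g k.
Proof.
  intros [e [e' [[hai [Hai ->]] Hdual]]] [hi [Hhi ->]].
  destruct (pairing_inverse a) as [hinv Hh]. destruct (pairing_inverse b) as [kbi Hk].
  assert (Ehai : hai = (kbi ⊗m hinv) ∘ chi_inv A (pob b) (pob a)).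
  { apply (inverse_unique Hai). now apply inverse_pair_herm_tens. }
  subst hai. exact (dagger_duality_dual_pairing Hh Hk (proj1 Hhi) Hdual).
Qed.

Lemma has_dagger_duals_of_Pstar_eq : pairing_set_eq (Pstar D P) P -> has_dagger_duals.
Proof.
  intro Heq. split.
  - intro a. destruct (dual_pairing_exists a) as [k Hk].
    pose proof (proj1 (Heq _ k) (Pstar_dual_pairing (pin a) Hk)) as pk.
    exists {| pob := _; ph := k; pin := pk |}. exact (dual_pairing_is_dagger_dual Hk pk).
  - intro b. destruct (proj2 (Heq _ _) (pin b)) as [c [h [k [Hh [Hk [g [Hg Eb]]]]]]].
    pose proof (proj1 (Heq _ k) (Pstar_dual_pairing Hh Hk)) as pk.
    set (a := {| pob := c; ph := h; pin := Hh |}).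
    set (b0 := {| pob := c^*; ph := k; pin := pk |}).
    exists a. apply (is_dagger_dual_unitarily_iso (a := a) (b := b0)).
    + apply unitarily_iso_refl.
    + exact (unitarily_iso_transfer (b0 := b0) Hg Eb).
    + exact (dual_pairing_is_dagger_dual (a := a) Hk pk).
Qed.

Lemma Pstar_eq_of_has_dagger_duals : has_dagger_duals -> pairing_set_eq (Pstar D P) P.
Proof.
  intros [Hdual Hcodual] c k. split.
  - intros [c0 [h [k0 [Hh [Hk0 [g [Hg ->]]]]]]].
    destruct (Hdual {| pob := c0; ph := h; pin := Hh |}) as [b Hb].
    destruct (dagger_dual_transfer Hb Hk0) as [phi [[phii Hphi] Eb]]. cbn in Eb.
    apply (pos_trans hP); [| exact Hg].
    rewrite <- (transfer_inverse k0 Hphi), <- Eb.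
    apply (pos_trans hP); [apply pin | exists phi; now apply inverse_pair_sym].
  - intro Hk. destruct (Hcodual {| pob := c; ph := k; pin := Hk |}) as [a Ha].
    destruct (dual_pairing_exists a) as [k0 Hk0].
    destruct (dagger_dual_transfer Ha Hk0) as [g [Hg Eb]].
    exists (pob a), (ph a), k0. split; [apply pin | split; [exact Hk0 |]].
    exists g. split; assumption.
Qed.

Lemma Pstar_eq_iff_has_dagger_duals : pairing_set_eq (Pstar D P) P <-> has_dagger_duals.
Proof. split; [apply has_dagger_duals_of_Pstar_eq | apply Pstar_eq_of_has_dagger_duals]. Qed.
End DaggerDuals.

Unset Implicit Arguments.

Section Transport.
Context {X Y : SMAICD} {P : PairingSet (sA X)} {hP : PosStruct P}
  {Q : PairingSet (sA Y)} {hQ : PosStruct Q} (E : SMDaggerEquivalence X Y P hP Q hQ).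
Local Notation Fo := (F X Y P hP Q hQ E).
Local Notation Fm := (Fm X Y P hP Q hQ E).
Local Notation mu := (mu X Y P hP Q hQ E).
Local Notation mu0 := (mu0 X Y P hP Q hQ E).
Local Notation MX := (sM X).
Local Notation MY := (sM Y).
Local Notation "f ⊗Y g" := (tensm MY f g) (at level 30, right associativity).
Local Notation "f ⊗X g" := (tensm MX f g) (at level 30, right associativity).
Local Notation "x ⊗x y" := (tens MX x y) (at level 30, right associativity).
Local Notation pt := (ptens hP).
Local Notation pu := (punit hP).

Lemma Fm_comp (a b c : PObj P) (f : Hom (pob a) (pob b)) (g : Hom (pob b) (pob c)) :
  Fm a c (g ∘ f) = Fm b c g ∘ Fm a b f.
Proof. apply F_comp. Qed.

Lemma Fm_inverse_pair (a b : PObj P) (f : Hom (pob a) (pob b)) g :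
  inverse_pair f g -> inverse_pair (Fm a b f) (Fm b a g).
Proof. intros [H1 H2]. split; rewrite <- Fm_comp; [rewrite H1 | rewrite H2]; apply F_id. Qed.

Lemma mu_natural_l (a b b' : PObj P) (g : Hom (pob b) (pob b')) :
  mu a b' ∘ (idm (pob (Fo a)) ⊗Y Fm b b' g)
  = Fm (pt a b) (pt a b') (idm (pob a) ⊗X g) ∘ mu a b.
Proof. rewrite <- (F_id X Y P hP Q hQ E a). apply mu_nat. Qed.

Lemma mu_natural_r (a a' b : PObj P) (f : Hom (pob a) (pob a')) :
  mu a' b ∘ (Fm a a' f ⊗Y idm (pob (Fo b)))
  = Fm (pt a b) (pt a' b) (f ⊗X idm (pob b)) ∘ mu a b.
Proof. rewrite <- (F_id X Y P hP Q hQ E b). apply mu_nat. Qed.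

Lemma F_lunit_inv (a : PObj P) :
  mu pu a ∘ (mu0 ⊗Y idm _) ∘ lam_inv MY (pob (Fo a)) = Fm a (pt pu a) (lam_inv MX (pob a)).
Proof.
  eapply comp_inverse_eq; [apply Fm_inverse_pair, lam_iso, sM_laws | apply lam_iso, sM_laws |].
  rewrite compA. apply F_lunit.
Qed.

Lemma F_runit_inv (a : PObj P) :
  mu a pu ∘ (idm _ ⊗Y mu0) ∘ rho_inv MY (pob (Fo a)) = Fm a (pt a pu) (rho_inv MX (pob a)).
Proof.
  eapply comp_inverse_eq; [apply Fm_inverse_pair, rho_iso, sM_laws | apply rho_iso, sM_laws |].
  rewrite compA. apply F_runit.
Qed.

Lemma F_assoc_inv (a b c : PObj P) :
  mu (pt a b) c ∘ (mu a b ⊗Y idm _) ∘ alpha_inv MY _ _ _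
  = Fm (pt a (pt b c)) (pt (pt a b) c) (alpha_inv MX (pob a) (pob b) (pob c))
      ∘ mu a (pt b c) ∘ (idm _ ⊗Y mu b c).
Proof.
  rewrite <- (compA (idm _ ⊗Y mu b c)). symmetry.
  eapply natural_inverse; [apply Fm_inverse_pair, alpha_iso, sM_laws | apply alpha_iso, sM_laws |].
  rewrite compA. apply F_assoc.
Qed.

Lemma Fm_zigzag_obj (a b : PObj P) (e : Hom (pob b ⊗x pob a) (munit MX))
    (c : Hom (munit MX) (pob a ⊗x pob b)) mui mu0i :
  inverse_pair (mu a b) mui -> inverse_pair mu0 mu0i ->
  zigzag_obj (mu0i ∘ Fm (pt b a) pu e ∘ mu b a) (mui ∘ Fm pu (pt a b) c ∘ mu0)
  = Fm a a (zigzag_obj e c).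
Proof.
  intros [_ Hmu] [_ Hmu0]. unfold zigzag_obj.
  rewrite (Fm_comp a (pt pu a) a), (Fm_comp (pt pu a) (pt (pt a b) a) a),
    (Fm_comp (pt (pt a b) a) (pt a (pt b a)) a), (Fm_comp (pt a (pt b a)) (pt a pu) a).
  rewrite <- (F_runit X Y P hP Q hQ E a). assoc_right.
  rewrite tensm_comp_r_chain. chain_rewrite Hmu0. rewrite idm_comp, tensm_comp_r. assoc_right.
  chain_rewrite (mu_natural_l a (pt b a) pu e).
  chain_rewrite <- (F_assoc X Y P hP Q hQ E a b a).
  rewrite tensm_comp_l_chain. chain_rewrite Hmu. rewrite idm_comp, tensm_comp_l. assoc_right.
  chain_rewrite (mu_natural_r pu (pt a b) a c).
  chain_rewrite (F_lunit_inv a). reflexivity.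
Qed.

Lemma Fm_zigzag_dual (a b : PObj P) (e : Hom (pob b ⊗x pob a) (munit MX))
    (c : Hom (munit MX) (pob a ⊗x pob b)) mui mu0i :
  inverse_pair (mu a b) mui -> inverse_pair mu0 mu0i ->
  zigzag_dual (mu0i ∘ Fm (pt b a) pu e ∘ mu b a) (mui ∘ Fm pu (pt a b) c ∘ mu0)
  = Fm b b (zigzag_dual e c).
Proof.
  intros [_ Hmu] [_ Hmu0]. unfold zigzag_dual.
  rewrite (Fm_comp b (pt b pu) b), (Fm_comp (pt b pu) (pt b (pt a b)) b),
    (Fm_comp (pt b (pt a b)) (pt (pt b a) b) b), (Fm_comp (pt (pt b a) b) (pt pu b) b).
  rewrite <- (F_lunit X Y P hP Q hQ E b). assoc_right.
  rewrite tensm_comp_l_chain. chain_rewrite Hmu0. rewrite idm_comp, tensm_comp_l. assoc_right.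
  chain_rewrite (mu_natural_r (pt b a) pu b e).
  chain_rewrite (F_assoc_inv b a b).
  rewrite tensm_comp_r_chain. chain_rewrite Hmu. rewrite idm_comp, tensm_comp_r. assoc_right.
  chain_rewrite (mu_natural_l b pu (pt a b) c).
  chain_rewrite (F_runit_inv b). reflexivity.
Qed.

Lemma is_dagger_image (a b : PObj P) e e' mui mu0i :
  is_dagger (pt b a) pu e e' ->
  is_dagger (ptens hQ (Fo b) (Fo a)) (Fo (pt b a)) (mu b a) mui -> inverse_pair mu0 mu0i ->
  is_dagger (punit hQ) (Fo pu) mu0 mu0i ->
  is_dagger (ptens hQ (Fo b) (Fo a)) (punit hQ)
    (mu0i ∘ Fm (pt b a) pu e ∘ mu b a) (mui ∘ Fm pu (pt b a) e' ∘ mu0).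
Proof.
  intros He Hmu Imu0 Hmu0. rewrite <- compA.
  apply (is_dagger_comp (a := ptens hQ (Fo b) (Fo a)) (b := Fo pu) (c := punit hQ));
    [| now apply is_dagger_sym].
  apply (is_dagger_comp (a := ptens hQ (Fo b) (Fo a)) (b := Fo (pt b a)) (c := Fo pu));
    [exact Hmu | now apply F_dagger].
Qed.

Lemma sigma_image (a b : PObj P) e' mui_ab mui_ba :
  inverse_pair (mu a b) mui_ab -> inverse_pair (mu b a) mui_ba ->
  sigma MY (pob (Fo b)) (pob (Fo a)) ∘ (mui_ba ∘ Fm pu (pt b a) e' ∘ mu0)
  = mui_ab ∘ Fm pu (pt a b) (sigma MX (pob b) (pob a) ∘ e') ∘ mu0.
Proof.
  intros Iab Iba.
  assert (Hsigma : sigma MY (pob (Fo b)) (pob (Fo a)) ∘ mui_ba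
                   = mui_ab ∘ Fm (pt b a) (pt a b) (sigma MX (pob b) (pob a))).
  { symmetry. eapply natural_inverse; [exact Iab | exact Iba | symmetry; apply F_sym]. }
  rewrite (Fm_comp pu (pt b a) (pt a b)). assoc_right. chain_rewrite Hsigma. reflexivity.
Qed.

Lemma Fm_eq_idm (a : PObj P) (f : Hom (pob a) (pob a)) : Fm a a f = idm _ <-> f = idm _.
Proof.
  rewrite <- (F_id X Y P hP Q hQ E a). split; [apply F_faithful | now intros ->].
Qed.

Lemma is_duality_image (a b : PObj P) e e' mui_ab mui_ba mu0i :
  inverse_pair (mu a b) mui_ab -> inverse_pair (mu b a) mui_ba -> inverse_pair mu0 mu0i ->
  is_duality (mu0i ∘ Fm (pt b a) pu e ∘ mu b a)
    (sigma MY (pob (Fo b)) (pob (Fo a)) ∘ (mui_ba ∘ Fm pu (pt b a) e' ∘ mu0))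
  <-> is_duality e (sigma MX (pob b) (pob a) ∘ e').
Proof.
  intros Iab Iba I0. unfold is_duality.
  rewrite (sigma_image a b e' mui_ab mui_ba Iab Iba), (Fm_zigzag_obj a b _ _ _ _ Iab I0),
    (Fm_zigzag_dual a b _ _ _ _ Iab I0), !Fm_eq_idm.
  reflexivity.
Qed.

Lemma is_dagger_dual_image (a b : PObj P) :
  is_dagger_dual a b -> is_dagger_dual (Fo a) (Fo b).
Proof.
  intros [e [e' [He Hdual]]].
  destruct (mu_unitary X Y P hP Q hQ E a b) as [mui_ab [_ Iab]].
  destruct (mu_unitary X Y P hP Q hQ E b a) as [mui_ba [Dba Iba]].
  destruct (mu0_unitary X Y P hP Q hQ E) as [mu0i [D0 I0]].
  exists (mu0i ∘ Fm (pt b a) pu e ∘ mu b a), (mui_ba ∘ Fm pu (pt b a) e' ∘ mu0). split.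
  - now apply is_dagger_image.
  - cbn. now apply (is_duality_image a b e e' mui_ab mui_ba mu0i).
Qed.

Lemma is_dagger_dual_of_image (a b : PObj P) :
  is_dagger_dual (Fo a) (Fo b) -> is_dagger_dual a b.
Proof.
  intros [e0 [e0' [He0 Hdual]]].
  destruct (mu_unitary X Y P hP Q hQ E a b) as [mui_ab [_ Iab]].
  destruct (mu_unitary X Y P hP Q hQ E b a) as [mui_ba [Dba Iba]].
  destruct (mu0_unitary X Y P hP Q hQ E) as [mu0i [D0 I0]].
  destruct (F_full X Y P hP Q hQ E (pt b a) pu (mu0 ∘ e0 ∘ mui_ba)) as [e He].
  assert (Ee0 : e0 = mu0i ∘ Fm (pt b a) pu e ∘ mu b a).
  { rewrite He. cbn in *. assoc_right. chain_rewrite (proj1 Iba). rewrite comp_idm.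
    chain_rewrite (proj1 I0). now rewrite idm_comp. }
  destruct (is_dagger_exists (a := pt b a) (b := pu) e) as [e' He'].
  assert (Ee0' : e0' = mui_ba ∘ Fm pu (pt b a) e' ∘ mu0).
  { apply (is_dagger_unique He0). rewrite Ee0. now apply is_dagger_image. }
  exists e, e'. split; [exact He' |].
  subst e0 e0'. cbn in Hdual. now apply (is_duality_image a b e e' mui_ab mui_ba mu0i).
Qed.

Lemma has_dagger_duals_transport : has_dagger_duals (hP := hP) <-> has_dagger_duals (hP := hQ).
Proof.
  split.
  - intros [Hdual Hcodual]. split.
    + intro a'. destruct (F_ess_surj X Y P hP Q hQ E a') as [a Ha].
      destruct (Hdual a) as [b Hb]. exists (Fo b).
      apply (is_dagger_dual_unitarily_iso (a := Fo a) (b := Fo b));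
        [now apply unitarily_iso_sym | apply unitarily_iso_refl | now apply is_dagger_dual_image].
    + intro b'. destruct (F_ess_surj X Y P hP Q hQ E b') as [b Hb].
      destruct (Hcodual b) as [a Ha]. exists (Fo a).
      apply (is_dagger_dual_unitarily_iso (a := Fo a) (b := Fo b));
        [apply unitarily_iso_refl | now apply unitarily_iso_sym | now apply is_dagger_dual_image].
  - intros [Hdual Hcodual]. split.
    + intro a. destruct (Hdual (Fo a)) as [b' Hb'].
      destruct (F_ess_surj X Y P hP Q hQ E b') as [b Hb].
      exists b. apply is_dagger_dual_of_image.
      apply (is_dagger_dual_unitarily_iso (a := Fo a) (b := b'));
        [apply unitarily_iso_refl | exact Hb | exact Hb'].
    + intro b. destruct (Hcodual (Fo b)) as [a' Ha'].
      destruct (F_ess_surj X Y P hP Q hQ E a') as [a Ha].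
      exists a. apply is_dagger_dual_of_image.
      apply (is_dagger_dual_unitarily_iso (a := a') (b := Fo b));
        [exact Ha | apply unitarily_iso_refl | exact Ha'].
Qed.
End Transport.

Theorem mainTheorem12 (X Y : SMAICD)
    (P : PairingSet (sA X)) (hP : PosStruct P)
    (P' : PairingSet (sA Y)) (hP' : PosStruct P')
    (E : sm_dagger_equivalent hP hP') :
  pairing_set_eq (Pstar (sD X) P) P <-> pairing_set_eq (Pstar (sD Y) P') P'.
Proof.
  destruct E as [E].
  rewrite (Pstar_eq_iff_has_dagger_duals (hP := hP)), (Pstar_eq_iff_has_dagger_duals (hP := hP')).
  exact (has_dagger_duals_transport E).
Qed.
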